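(* Let $P$ and $P'$ be two probability measures on a measurable space $(\Omega,\mathcal A)$. Let $a,b>0$ and let $(\Delta_n)_{n\in\mathbb N}$ be a sequence of positive numbers with $\Delta_n\to\infty$. Set $K_n:=\lceil an^2\rceil$. Suppose that for all sufficiently large $n\in\mathbb N$ there are random variables $X^n_k$, $k\in\{1,\dots,K_n\}$, on $(\Omega,\mathcal A)$ which are pairwise uncorrelated in $k$ both under $P$ and under $P'$, satisfy $|X^n_k|\le b$, and satisfy $$E_{P'}[X^n_k]-E_P[X^n_k]\ge\tfrac1n\Delta_n,\qquad k\in\{1,\dots,K_n\}.$$ Then $P$ and $P'$ are mutually singular. *)

From HB Require Import structures.
From mathcomp Require Import all_boot all_order all_algebra.
From mathcomp Require Import all_classical all_reals all_analysis.
Set Implicit Arguments. Unset Strict Implicit. Unset Printing Implicit Defensive.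
Import Order.TTheory GRing.Theory Num.Theory.
Local Open Scope classical_set_scope.
Local Open Scope ring_scope.

Definition Expect d (T : measurableType d) (R : realType)
  (P : probability T R) (f : T -> R) : \bar R := (\int[P]_x (f x)%:E)%E.

Definition mutually_singular d (T : measurableType d) (R : realType)
  (P Q : set T -> \bar R) : Prop :=
  exists A : set T, [/\ measurable A, P A = 0%E & Q (~` A) = 0%E].

Definition Kn (R : realType) (a : R) (n : nat) : nat :=
  `| Num.ceil (a * n%:R ^+ 2) |%N.

From HB Require Import structures.
From mathcomp Require Import all_boot all_order all_algebra.
From mathcomp Require Import all_classical all_reals all_analysis.
From mathcomp Require Import measurable_realfun.
From mathcomp Require Import lra ring.
Set Implicit Arguments. Unset Strict Implicit. Unset Printing Implicit Defensive.
Import Order.TTheory GRing.Theory Num.Theory.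
Local Open Scope classical_set_scope.
Local Open Scope ring_scope.

(** Put [S := X_1 + ... + X_K] with [K = Kn a n]. The [X_k] are
uncorrelated and bounded by [b], so [S] has variance at most [K b^2] under
both measures, while its two means differ by at least [K Delta_n / n]. By
Chebyshev's inequality, thresholding [S] halfway between the means gives a set
[B] with [P B] and [P' (~` B)] at most [4 b^2 / (K (Delta_n / n)^2)
<= 4 b^2 / (a Delta_n^2)], which tends to [0]. Measures admitting such
separating sets of arbitrarily small mass are mutually singular. *)

Lemma nneg_le_inv_succn_eq0 (R : realType) (x : \bar R) : (0 <= x)%E ->
  (forall J : nat, x <= (J.+1%:R^-1)%:E)%E -> x = 0%E.
Proof.
move=> x0 xJ; apply/eqP; rewrite eq_le x0 andbT; apply/lee_addgt0Pr => e e0.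
rewrite add0e; apply: (le_trans (xJ (Num.truncn e^-1))); rewrite lee_fin.
have einv_gt0 : 0 < e^-1 by rewrite invr_gt0.
have /andP[_ lt_einv] := Num.Theory.truncn_itv (ltW einv_gt0).
by rewrite -[leRHS]invrK ltW// ltf_pV2// ?posrE ?invr_gt0.
Qed.

Lemma inv_succn_div_exp2_le (R : realType) (J j : nat) :
  J.+1%:R^-1 / (2 ^ j.+1)%:R <= j.+1%:R^-1 :> R.
Proof.
rewrite ler_pdivrMr ?ltr0n ?expn_gt0//.
apply: (@le_trans _ _ 1); first by rewrite invf_le1 ?ler1n ?ltr0n.
by rewrite ler_pdivlMl ?ltr0n// mulr1 ler_nat ltnW// ltn_expl.
Qed.

Lemma mutually_singular_of_separating d (T : measurableType d)
    (R : realType) (P P' : probability T R) :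
  (forall e : R, 0 < e -> exists B, [/\ measurable B, (P B <= e%:E)%E &
     (P' (~` B) <= e%:E)%E]) ->
  mutually_singular P P'.
Proof.
move=> sepPP'.
pose eps (J j : nat) : R := J.+1%:R^-1 / (2 ^ j.+1)%:R.
have eps_gt0 J j : 0 < eps J j by rewrite divr_gt0 ?invr_gt0 ?ltr0n ?expn_gt0.
have [B HB] : exists B : nat -> nat -> set T, forall J j,
    [/\ measurable (B J j), (P (B J j) <= (eps J j)%:E)%E &
     (P' (~` B J j) <= (eps J j)%:E)%E].
  have BJ J : exists f : nat -> set T, forall j,
      [/\ measurable (f j), (P (f j) <= (eps J j)%:E)%E &
       (P' (~` f j) <= (eps J j)%:E)%E].
    by have [f hf] := choice (fun j => sepPP' _ (eps_gt0 J j)); exists f.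
  by have [f hf] := choice BJ; exists f.
have mB J j : measurable (B J j) by have [] := HB J j.
pose U J := \bigcup_j B J j.
have mU J : measurable (U J) by apply: bigcupT_measurable.
(* [P (U J) <= 1/(J+1)] by subadditivity, and [~` U J] lies in every [~` B J j]. *)
exists (\bigcap_J U J); split; first exact: bigcapT_measurable.
- apply: nneg_le_inv_succn_eq0 => // J.
  apply: (le_trans (le_measure _ _ _ (@bigcap_inf _ _ J setT U I)));
    rewrite ?inE//; first exact: bigcapT_measurable.
  apply: (le_trans (measure_sigma_subadditive _ (mB J) (mU J) (@subset_refl _ _))).
  have J_inv_ge0 : 0 <= J.+1%:R^-1 :> R by rewrite invr_ge0.
  apply: (le_trans _ (epsilon_trick0 xpredT J_inv_ge0)).
  apply: lee_nneseries => [j _ _|j _]; first exact: measure_ge0.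
  by have [] := HB J j.
- have mCU J : measurable (~` U J) by apply: measurableC.
  rewrite setC_bigcap; apply/eqP; rewrite eq_le measure_ge0 andbT.
  apply: (le_trans (measure_sigma_subadditive _ mCU _ (@subset_refl _ _))).
    exact: bigcupT_measurable.
  rewrite eseries0// => J _ _; apply: nneg_le_inv_succn_eq0 => // j.
  apply: (@le_trans _ _ (P' (~` B J j))).
    apply: le_measure; rewrite ?inE; [exact: mCU|exact: measurableC|].
    by apply: subsetC; exact: bigcup_sup.
  have [_ _ P'Bc] := HB J j; apply: (le_trans P'Bc); rewrite lee_fin.
  exact: inv_succn_div_exp2_le.
Qed.

Section uncorrelated_sum.
Context d (T : measurableType d) (R : realType) (Q : probability T R).
Local Open Scope ereal_scope.

Lemma bounded_Lfun2 (f : T -> R) (b : R) : measurable_fun setT f ->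
  (forall x, `|f x| <= b)%R -> f \in Lfun Q 2%:E.
Proof.
move=> mf fb; rewrite inE; apply/andP; split; first by rewrite inE.
rewrite inE /= /finite_norm unlock /Lnorm; apply: poweR_lty.
under eq_integral => x _ do rewrite /comp abse_EFin poweR_EFin.
apply: (@le_lt_trans _ _ (\int[Q]_x (`|b| `^ 2)%:E)).
  apply: ge0_le_integral => //.
  - apply/measurable_EFinP.
    apply: (@measurableT_comp _ _ _ _ _ _ (@powR R ^~ 2%R)) => //.
    exact: measurableT_comp.
  - move=> x _ /=; rewrite lee_fin ge0_ler_powR// ?nnegrE//.
    exact: le_trans (fb x) (ler_norm b).
by rewrite integral_cst//= probability_setT mule1 ltry.
Qed.

Lemma bounded_Lfun1 (f : T -> R) (b : R) : measurable_fun setT f ->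
  (forall x, `|f x| <= b)%R -> f \in Lfun Q 1.
Proof.
move=> mf fb; apply: Lfun_subset12; first exact: fin_num_measure.
exact: bounded_Lfun2 mf fb.
Qed.

Lemma variance_le_sqr_bound (f : T -> R) (b : R) : measurable_fun setT f ->
  (forall x, `|f x| <= b)%R -> 'V_Q[f] <= (b ^+ 2)%:E.
Proof.
move=> mf fb; rewrite varianceE ?(bounded_Lfun2 mf fb)//.
have Ef_fin := expectation_fin_num (bounded_Lfun1 mf fb).
have Ef2_le : 'E_Q[f ^+ 2] <= (b ^+ 2)%:E.
  rewrite -(expectation_cst Q); apply: expectation_le => //.
  - by rewrite expr2; apply: measurable_funM.
  - by move=> x; rewrite -[((f ^+ 2) x)%R]/(f x ^+ 2)%R sqr_ge0.
  - by move=> x; rewrite /= sqr_ge0.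
  - apply: aeW => x; rewrite -[((f ^+ 2) x)%R]/(f x ^+ 2)%R /=.
    rewrite -real_normK ?num_real// ler_pXn2r ?nnegrE//.
    exact: le_trans (fb x).
rewrite -(fineK Ef_fin) -EFin_expe; apply: le_trans Ef2_le.
by rewrite leeBlDr// leeDl// lee_fin sqr_ge0.
Qed.

Lemma covariance_eq0_of_uncorrelated (f g : T -> R) :
  f \in Lfun Q 2%:E -> g \in Lfun Q 2%:E ->
  'E_Q[f \* g] = 'E_Q[f] * 'E_Q[g] -> covariance Q f g = 0.
Proof.
move=> f2 g2 Efg.
have Qfin : Q setT \is a fin_num by exact: fin_num_measure.
have f1 := Lfun_subset12 Qfin f2; have g1 := Lfun_subset12 Qfin g2.
rewrite covarianceE ?Lfun2_mul_Lfun1//.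
have -> : 'E_Q[f * g] = 'E_Q[f] * 'E_Q[g] by exact: Efg.
by rewrite subee// fin_numM// expectation_fin_num.
Qed.

Variables (K : nat) (Y : nat -> T -> R).
Hypothesis mY : forall k, (k < K)%N -> measurable_fun setT (Y k).

Lemma measurable_sum_ord : (\sum_(k < K) Y k)%R \in mfun.
Proof. by apply: rpred_sum => k _; rewrite inE; exact: mY. Qed.

Lemma expectation_sum_ord : (forall k, (k < K)%N -> Y k \in Lfun Q 1) ->
  'E_Q[(\sum_(k < K) Y k)%R] = (\sum_(k < K) fine 'E_Q[Y k])%:E.
Proof.
move=> Y1; have : (K <= K)%N by [].
elim: {-2}K => [|m IH] mK; first by rewrite !big_ord0 expectation_cst.
have Sm1 : (\sum_(k < m) Y k)%R \in Lfun Q 1.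
  apply: rpred_sum => k _.
  by apply: Y1; exact: ltn_trans (ltn_ord k) mK.
rewrite !big_ord_recr expectationD ?Y1// IH ?(ltnW mK)// EFinD fineK//.
exact: expectation_fin_num (Y1 m mK).
Qed.

Variable b : R.
Hypothesis bY : forall k, (k < K)%N -> forall x, (`|Y k x| <= b)%R.
Hypothesis uncorrelated_Y : forall k l, (k < K)%N -> (l < K)%N -> k != l ->
  'E_Q[Y k \* Y l] = 'E_Q[Y k] * 'E_Q[Y l].

Lemma variance_sum_ord_le : 'V_Q[(\sum_(k < K) Y k)%R] <= (K%:R * b ^+ 2)%:E.
Proof.
have Y2 k : (k < K)%N -> Y k \in Lfun Q 2%:E.
  by move=> kK; exact: bounded_Lfun2 (mY kK) (bY kK).
have S2 m : (m <= K)%N -> (\sum_(k < m) Y k)%R \in Lfun Q 2%:E.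
  move=> mK; apply: rpred_sum => [|p1 k _]; first by rewrite lee_fin ler1n.
  by apply: Y2; exact: leq_trans mK.
have cov_S_Y m l : (m <= l)%N -> (l < K)%N ->
    covariance Q (\sum_(k < m) Y k)%R (Y l) = 0.
  elim: m => [|m IH] ml lK; first by rewrite big_ord0 covariance_cst_l.
  have mK : (m < K)%N := ltn_trans ml lK.
  rewrite big_ord_recr covarianceDl ?S2 ?Y2 ?(ltnW mK) ?IH ?(ltnW ml)// add0e.
  apply: covariance_eq0_of_uncorrelated; rewrite ?Y2//.
  by apply: uncorrelated_Y; rewrite // neq_ltn ml.
have : (K <= K)%N by [].
elim: {-2}K => [|m IH] mK; first by rewrite big_ord0 variance_cst mul0r.
rewrite big_ord_recr varianceD ?S2 ?Y2 ?(ltnW mK)// cov_S_Y// mule0 adde0.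
rewrite -natr1 mulrDl mul1r EFinD leeD ?IH ?(ltnW mK)//.
exact: variance_le_sqr_bound (mY mK) (bY mK).
Qed.

Lemma chebyshev_sum_ord (e : R) : (0 < e)%R ->
  Q [set x | (e <= `|(\sum_(k < K) Y k)%R x - fine 'E_Q[(\sum_(k < K) Y k)%R]|)%R]
    <= (e ^- 2 * (K%:R * b ^+ 2))%:E.
Proof.
move=> e0; apply: le_trans (chebyshev (mfun_Sub measurable_sum_ord) e0) _.
by rewrite EFinM lee_pmul2l ?lte_fin ?invr_gt0 ?exprn_gt0// variance_sum_ord_le.
Qed.

End uncorrelated_sum.

Lemma chebyshev_radius_le (R : realFieldType) (K D b e : R) :
  0 < K -> 0 < D -> K * D / 2 <= e ->
  e ^- 2 * (K * b ^+ 2) <= 4 * b ^+ 2 / (K * D ^+ 2).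
Proof.
move=> K0 D0 eKD.
have KD2 : 0 < K * D / 2 by rewrite divr_gt0 ?mulr_gt0.
have einv : e ^- 2 <= ((K * D / 2) ^+ 2)^-1.
  have e_gt0 : 0 < e := lt_le_trans KD2 eKD.
  by rewrite lef_pV2 ?posrE ?exprn_gt0// ler_pXn2r ?nnegrE ?(ltW KD2) ?(ltW e_gt0).
apply: le_trans (ler_wpM2r (mulr_ge0 (ltW K0) (sqr_ge0 b)) einv) _.
rewrite [leLHS](_ : _ = 4 * b ^+ 2 / (K * D ^+ 2))//.
by field; rewrite !gt_eqF.
Qed.

Lemma measurable_ge_set d (T : measurableType d) (R : realType)
    (f : T -> R) (c : R) :
  measurable_fun setT f -> measurable [set x | c <= f x].
Proof.
move=> mf; rewrite -preimage_itvcy -[_ @^-1` _]setTI.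
exact: mf measurableT _ (measurable_itv _).
Qed.

Section separation.
Context d (T : measurableType d) (R : realType) (P P' : probability T R).
Local Open Scope ereal_scope.

Lemma mean_sum_ord_gap (K : nat) (Y : nat -> T -> R) (D : R) :
  (forall k, (k < K)%N -> Y k \in Lfun P 1) ->
  (forall k, (k < K)%N -> Y k \in Lfun P' 1) ->
  (forall k, (k < K)%N -> D%:E <= 'E_P'[Y k] - 'E_P[Y k]) ->
  (K%:R * D <= fine 'E_P'[(\sum_(k < K) Y k)%R] - fine 'E_P[(\sum_(k < K) Y k)%R])%R.
Proof.
move=> Y1 Y1' gap; rewrite !expectation_sum_ord// -sumrB.
have -> : (K%:R * D = \sum_(k < K) D)%R by rewrite sumr_const card_ord mulr_natl.
apply: ler_sum => k _; rewrite -lee_fin EFinB.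
by rewrite !fineK ?expectation_fin_num ?Y1 ?Y1' ?gap.
Qed.

Lemma separating_set_of_uncorrelated (K : nat) (Y : nat -> T -> R) (b D : R) :
  (0 < D)%R -> (0 < K)%N ->
  (forall k, (k < K)%N -> measurable_fun setT (Y k)) ->
  (forall k, (k < K)%N -> forall x, `|Y k x| <= b)%R ->
  (forall k l, (k < K)%N -> (l < K)%N -> k != l ->
     'E_P[Y k \* Y l] = 'E_P[Y k] * 'E_P[Y l] /\
     'E_P'[Y k \* Y l] = 'E_P'[Y k] * 'E_P'[Y l]) ->
  (forall k, (k < K)%N -> D%:E <= 'E_P'[Y k] - 'E_P[Y k]) ->
  exists B, [/\ measurable B, P B <= (4 * b ^+ 2 / (K%:R * D ^+ 2))%:E &
     P' (~` B) <= (4 * b ^+ 2 / (K%:R * D ^+ 2))%:E].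
Proof.
move=> D0 K0 mY bY uY gap.
pose S : T -> R := (\sum_(k < K) Y k)%R.
have mS : measurable_fun setT S.
  by have /set_mem := measurable_sum_ord mY.
pose m := fine 'E_P[S]; pose m' := fine 'E_P'[S].
have gapS : (K%:R * D <= m' - m)%R.
  by apply: mean_sum_ord_gap => // k kK; exact: bounded_Lfun1 (mY k kK) (bY k kK).
pose e := ((m' - m) / 2)%R.
have KD0 : (0 < K%:R * D)%R by rewrite mulr_gt0// ltr0n.
have e0 : (0 < e)%R by rewrite divr_gt0// (lt_le_trans KD0).
have e_le : (e ^- 2 * (K%:R * b ^+ 2) <= 4 * b ^+ 2 / (K%:R * D ^+ 2))%R.
  by apply: chebyshev_radius_le; rewrite ?ltr0n// /e; lra.
have mSdev c : measurable [set x | (e <= `|S x - c|)%R].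
  apply: measurable_ge_set; apply: measurableT_comp => //.
  exact: measurable_funB.
exists [set x | ((m + m') / 2 <= S x)%R]; split.
- exact: measurable_ge_set.
- apply: (@le_trans _ _ (P [set x | (e <= `|S x - m|)%R])).
    apply: le_measure; rewrite ?inE; [exact: measurable_ge_set|exact: mSdev|].
    by move=> x /= Sx; apply: le_trans (ler_norm _); rewrite /e; lra.
  apply: le_trans (chebyshev_sum_ord mY bY _ e0) _; last by rewrite lee_fin.
  by move=> k l kK lK kl; have [] := uY k l kK lK kl.
- apply: (@le_trans _ _ (P' [set x | (e <= `|S x - m'|)%R])).
    apply: le_measure; rewrite ?inE.
    + exact/measurableC/measurable_ge_set.
    + exact: mSdev.
    move=> x /= /negP; rewrite -ltNge => Sx.
    by rewrite -normrN; apply: le_trans (ler_norm _); rewrite /e; lra.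
  apply: le_trans (chebyshev_sum_ord mY bY _ e0) _; last by rewrite lee_fin.
  by move=> k l kK lK kl; have [] := uY k l kK lK kl.
Qed.

End separation.

Lemma Expect_expectation d (T : measurableType d) (R : realType)
    (P : probability T R) (f : T -> R) :
  (Expect P f = 'E_P[f])%E.
Proof. by rewrite /Expect unlock. Qed.

Lemma Kn_gt0 (R : realType) (a : R) n : 0 < a -> (0 < n)%N -> (0 < Kn a n)%N.
Proof.
move=> a0 n0; rewrite /Kn absz_gt0 gt_eqF// ceil_gt0 mulr_gt0// exprn_gt0//.
by rewrite ltr0n.
Qed.

Lemma Kn_ge (R : realType) (a : R) n : 0 <= a -> a * n%:R ^+ 2 <= (Kn a n)%:R.
Proof.
move=> a0; have an2 : 0 <= a * n%:R ^+ 2 by rewrite mulr_ge0 ?sqr_ge0.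
rewrite /Kn natr_absz ger0_norm ?ceil_ge// ceil_ge0.
by apply: lt_le_trans an2; rewrite ltrN10.
Qed.

Lemma Kn_separation_bound (R : realType) (a b e Delta : R) n :
  0 < a -> 0 < e -> 0 < Delta -> (0 < n)%N ->
  4 * b ^+ 2 / (a * e) <= Delta ^+ 2 ->
  4 * b ^+ 2 / ((Kn a n)%:R * (Delta / n%:R) ^+ 2) <= e.
Proof.
move=> a0 e0 D0 n0 hDelta.
have KD : a * Delta ^+ 2 <= (Kn a n)%:R * (Delta / n%:R) ^+ 2.
  rewrite expr_div_n [X in _ <= X]mulrA ler_pdivlMr ?exprn_gt0 ?ltr0n// mulrAC.
  by apply: ler_wpM2r; [exact: sqr_ge0|exact: Kn_ge (ltW a0)].
have aD0 : 0 < a * Delta ^+ 2 by rewrite mulr_gt0 ?exprn_gt0.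
rewrite ler_pdivrMr; last exact: lt_le_trans aD0 KD.
apply: le_trans (ler_wpM2l (ltW e0) KD).
rewrite ler_pdivrMr ?mulr_gt0// in hDelta.
apply: le_trans hDelta _.
by rewrite [leRHS](_ : _ = Delta ^+ 2 * (a * e))//; ring.
Qed.

Lemma cvgry_sqr_ge (R : realType) (u : nat -> R) (c : R) :
  u n @[n --> \oo] --> +oo -> \forall n \near \oo, c <= u n ^+ 2.
Proof.
move=> /cvgryPge /(_ (Num.max c 1)); apply: filterS => n.
rewrite ge_max => /andP[cu u1].
by rewrite expr2; apply: le_trans cu _; rewrite ler_peMr// (le_trans ler01).
Qed.

Theorem lemma4 (d : measure_display) (T : measurableType d) (R : realType)
  (P P' : probability T R) (a b : R) (Delta : nat -> R) :
  0 < a -> 0 < b ->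
  (forall n, 0 < Delta n) ->
  Delta n @[n --> \oo] --> +oo ->
  (\forall n \near \oo, exists X : nat -> T -> R,
     [/\ (forall k, (1 <= k <= Kn a n)%N -> measurable_fun setT (X k)),
         (forall k l, (1 <= k <= Kn a n)%N -> (1 <= l <= Kn a n)%N -> k != l ->
            Expect P (X k \* X l) = (Expect P (X k) * Expect P (X l))%E /\
            Expect P' (X k \* X l) = (Expect P' (X k) * Expect P' (X l))%E),
         (forall k, (1 <= k <= Kn a n)%N -> forall x, `|X k x| <= b) &
         (forall k, (1 <= k <= Kn a n)%N ->
            ((Delta n / n%:R)%:E <= Expect P' (X k) - Expect P (X k))%E)]) ->
  mutually_singular P P'.
Proof.
move=> a0 _ Delta_gt0 Delta_cvg HX.
apply: mutually_singular_of_separating => e e0.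
have [n [n_gt0 [Delta_large [X [mX uX bX gX]]]]] := filter_ex
  (filterI (nbhs_infty_gt 0)
    (filterI (cvgry_sqr_ge (4 * b ^+ 2 / (a * e)) Delta_cvg) HX)).
(* The hypotheses are indexed by [1 <= k <= K]; shift them to [k < K]. *)
have Dn_gt0 : 0 < Delta n / n%:R by rewrite divr_gt0 ?ltr0n.
have [B [mB PB P'B]] := separating_set_of_uncorrelated (Y := fun k => X k.+1)
  Dn_gt0 (Kn_gt0 a0 n_gt0)
  (fun k kK => mX k.+1 kK) (fun k kK => bX k.+1 kK)
  (fun k l kK lK kl => ltac:(rewrite -!Expect_expectation; exact: uX))
  (fun k kK => ltac:(rewrite -!Expect_expectation; exact: gX)).
have sep_le := Kn_separation_bound a0 e0 (Delta_gt0 n) n_gt0 Delta_large.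
by exists B; split => //; [apply: le_trans PB _|apply: le_trans P'B _];
  rewrite lee_fin.
Qed.
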